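(* Let $(H,B_1,B_2)$ be a Rota-Baxter system of Hopf algebras with descendent Hopf algebra $H_{B_1,B_2}$, let $A$ be a unital commutative algebra, and let $\mathcal{B}_1,\mathcal{B}_2:\mathrm{Char}(H,A)\to\mathrm{Char}(H_{B_1,B_2},A)$ be given by $\mathcal{B}_i(f)(a)=f(B_i(a))$, $a\in H_1$. Then $\mathcal{B}_1(\ker\mathcal{B}_2)$ is a normal subgroup of $\operatorname{Im}(\mathcal{B}_1)$ and $\mathcal{B}_2(\ker\mathcal{B}_1)$ is a normal subgroup of $\operatorname{Im}(\mathcal{B}_2)$.
   Context: $\mathbb{F}$ is a field of characteristic $0$; Sweedler notation $\Delta(a)=a_1\otimes a_2$. A Rota-Baxter system of Hopf algebras is a triple $(H,B_1,B_2)$ with $(H,\cdot,1,\Delta,\epsilon,S)$ a cocommutative Hopf algebra, $B_1,B_2$ coalgebra homomorphisms with $B_1(1)=B_2(1)=1$, and for all $a,b\in H$: $B_1(a)B_1(b)=B_1(B_1(a_1)bS(B_2(a_2)))$, $B_2(a)B_2(b)=B_2(B_1(a_1)bS(B_2(a_2)))$. Descendent operation $a\circ b=B_1(a_1)bS(B_2(a_2))$, cocycle $\sigma(a)=B_1(a_1)S(B_2(a_2))$, $H_1=\operatorname{Im}(\sigma)$; $H_{B_1,B_2}$ is the Hopf algebra $H_1$ with product $\circ$, unit $1$, restricted $\Delta,\epsilon$, antipode $T(a)=S(B_1(a_1))B_2(a_2)$. Convolution: $(f\ast g)(a)=f(a_1)g(a_2)$. $\mathrm{Char}(H,A)$ is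 the group under $\ast$ of algebra homomorphisms $H\to A$; $\mathrm{Char}(H_{B_1,B_2},A)$ is the group under convolution (w.r.t. the coproduct of $H_1$) of algebra homomorphisms $(H_1,\circ,1)\to A$. *)

(* An element of H (x) H is represented by a finite list of pairs
   [:: (u_1, v_1); ...] standing for sum_i u_i (x) v_i, and all statements
   about such tensors are made through bilinear (resp. trilinear) maps,
   i.e. through the universal property of the tensor product.  All
   expressions built from the coproduct below (convolution, the descendent
   operation, sigma, T, ...) are bilinear in the Sweedler components, hence
   independent of the chosen representation. *)
From HB Require Import structures.
From mathcomp Require Import all_boot all_order all_algebra.
Set Implicit Arguments. Unset Strict Implicit. Unset Printing Implicit Defensive.
Import GRing.Theory.
Local Open Scope ring_scope.

Section Hopf.
Variable F : fieldType.
Variable H : algType F.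

Definition linmap (V : lmodType F) (f : H -> V) : Prop :=
  forall (a : F) (x y : H), f (a *: x + y) = a *: f x + f y.

Definition bilin (V : lmodType F) (b : H -> H -> V) : Prop :=
  (forall z, linmap (fun x => b x z)) /\ (forall x, linmap (b x)).

Definition trilin (V : lmodType F) (g : H -> H -> H -> V) : Prop :=
  [/\ forall y z, linmap (fun x => g x y z),
      forall x z, linmap (fun y => g x y z) &
      forall x y, linmap (g x y)].

Definition tsum (V : lmodType F) (b : H -> H -> V) (s : seq (H * H)) : V :=
  \sum_(p <- s) b p.1 p.2.

Variable cop : H -> seq (H * H).
Variable eps : H -> F.
Variable S : H -> H.

Record cocomm_hopf : Prop := {
  cop_lin : forall (V : lmodType F) (b : H -> H -> V), bilin b ->
    forall a x y, tsum b (cop (a *: x + y)) = a *: tsum b (cop x) + tsum b (cop y);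
  cop_coassoc : forall (V : lmodType F) (g : H -> H -> H -> V), trilin g ->
    forall x, \sum_(p <- cop x) \sum_(q <- cop p.1) g q.1 q.2 p.2
            = \sum_(p <- cop x) \sum_(q <- cop p.2) g p.1 q.1 q.2;
  eps_lin : forall a x y, eps (a *: x + y) = a * eps x + eps y;
  counit_l : forall x, \sum_(p <- cop x) eps p.1 *: p.2 = x;
  counit_r : forall x, \sum_(p <- cop x) eps p.2 *: p.1 = x;
  cop_mul : forall (V : lmodType F) (b : H -> H -> V), bilin b ->
    forall x y, tsum b (cop (x * y))
              = \sum_(p <- cop x) \sum_(q <- cop y) b (p.1 * q.1) (p.2 * q.2);
  cop_one : forall (V : lmodType F) (b : H -> H -> V), bilin b ->
    tsum b (cop 1) = b 1 1;
  eps_mul : forall x y, eps (x * y) = eps x * eps y;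
  eps_one : eps 1 = 1;
  S_lin : linmap S;
  antipode_l : forall x, \sum_(p <- cop x) S p.1 * p.2 = eps x *: 1;
  antipode_r : forall x, \sum_(p <- cop x) p.1 * S p.2 = eps x *: 1;
  cop_cocomm : forall (V : lmodType F) (b : H -> H -> V), bilin b ->
    forall x, tsum b (cop x) = tsum (fun u v => b v u) (cop x)
}.

Definition coalg_hom (B : H -> H) : Prop :=
  [/\ linmap B,
      (forall (V : lmodType F) (b : H -> H -> V), bilin b ->
         forall x, tsum b (cop (B x)) = tsum (fun u v => b (B u) (B v)) (cop x)) &
      forall x, eps (B x) = eps x].

Variables B1 B2 : H -> H.

Definition circ (a b : H) : H := \sum_(p <- cop a) B1 p.1 * b * S (B2 p.2).

(* cocycle sigma(a) = B1(a_1) S(B2(a_2)) and H_1 = Im sigma *)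
Definition sigma (a : H) : H := \sum_(p <- cop a) B1 p.1 * S (B2 p.2).
Definition inH1 (x : H) : Prop := exists a, x = sigma a.

(* antipode of H_{B1,B2}: T(a) = S(B1(a_1)) B2(a_2) *)
Definition Tant (a : H) : H := \sum_(p <- cop a) S (B1 p.1) * B2 p.2.

Record RB_system : Prop := {
  RB_hopf : cocomm_hopf;
  RB_B1_coalg : coalg_hom B1;
  RB_B2_coalg : coalg_hom B2;
  RB_B1_one : B1 1 = 1;
  RB_B2_one : B2 1 = 1;
  RB_eq1 : forall a b, B1 a * B1 b = B1 (circ a b);
  RB_eq2 : forall a b, B2 a * B2 b = B2 (circ a b)
}.

Variable A : comAlgType F.

Definition isChar (f : H -> A) : Prop :=
  [/\ linmap f, forall x y, f (x * y) = f x * f y & f 1 = 1].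

(* convolution (w.r.t. the coproduct; on H_1 this is the restricted one) *)
Definition conv (f g : H -> A) : H -> A :=
  fun x => \sum_(p <- cop x) f p.1 * g p.2.

Definition unitA : H -> A := fun x => eps x *: 1.

(* equality of maps on H_1 (elements of Char(H_{B1,B2}, A) live on H_1) *)
Definition eqOn1 (phi psi : H -> A) : Prop := forall x, inH1 x -> phi x = psi x.

Definition calB (B : H -> H) (f : H -> A) : H -> A := fun x => f (B x).

Definition invB (phi : H -> A) : H -> A := fun x => phi (Tant x).

Definition inKer (Bj : H -> H) (f : H -> A) : Prop :=
  isChar f /\ eqOn1 (calB Bj f) unitA.

Definition image_of_ker_normal (Bi Bj : H -> H) : Prop :=
  [/\
      (forall f, inKer Bj f -> exists g, isChar g /\ eqOn1 (calB Bi f) (calB Bi g)),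
      (exists f, inKer Bj f /\ eqOn1 (calB Bi f) unitA),
      (forall f g, inKer Bj f -> inKer Bj g ->
         exists h, inKer Bj h /\ eqOn1 (calB Bi h) (conv (calB Bi f) (calB Bi g))),
      (forall f, inKer Bj f ->
         exists h, inKer Bj h /\ eqOn1 (calB Bi h) (invB (calB Bi f))) &
      (forall g f, isChar g -> inKer Bj f ->
         exists h, inKer Bj h /\
           eqOn1 (calB Bi h)
                 (conv (conv (calB Bi g) (calB Bi f)) (invB (calB Bi g))))].

End Hopf.

From Pilot Require Import Defs.
From HB Require Import structures.
From mathcomp Require Import all_boot all_order all_algebra.
Set Implicit Arguments. Unset Strict Implicit. Unset Printing Implicit Defensive.
Import GRing.Theory.
Local Open Scope ring_scope.

(* Since sigma a = a o 1, a Rota-Baxter operator B satisfies B (sigma a) = B a,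
   so f is in ker calB_j iff f o B_j = eps on all of H.  Because B_j is a
   coalgebra map, f |-> f o B_j turns convolution into convolution, hence
   ker calB_j is a normal subgroup of Char(H, A).  The map calB_i is
   multiplicative for the same reason, and it maps the inverse f o S of f to
   the inverse calB_i f o T of calB_i f: both are convolution inverses of
   calB_i f, because (by cocommutativity) T a is a right inverse of a for the
   descendent product. *)

Section LinearMaps.
Variables (F : fieldType) (H : algType F).

Lemma linmap0 (V : lmodType F) (f : H -> V) : linmap f -> f 0 = 0.
Proof.
by move=> hf; apply: (addrI (f 0)); have := hf 1 0 0; rewrite !scale1r !addr0.
Qed.

Lemma linmapD (V : lmodType F) (f : H -> V) : linmap f -> forall x y, f (x + y) = f x + f y.
Proof. by move=> hf x y; have := hf 1 x y; rewrite !scale1r. Qed.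

Lemma linmapZ (V : lmodType F) (f : H -> V) : linmap f -> forall a x, f (a *: x) = a *: f x.
Proof. by move=> hf a x; have := hf a x 0; rewrite !addr0 linmap0 // addr0. Qed.

Lemma linmap_sum (V : lmodType F) (f : H -> V) (I : Type) (r : seq I) (G : I -> H) :
  linmap f -> f (\sum_(i <- r) G i) = \sum_(i <- r) f (G i).
Proof.
move=> hf; elim: r => [|i r IH]; first by rewrite !big_nil linmap0.
by rewrite !big_cons linmapD // IH.
Qed.

Lemma comp_linmap (V : lmodType F) (f : H -> V) (g : H -> H) :
  linmap f -> linmap g -> linmap (fun x => f (g x)).
Proof. by move=> hf hg a x y; rewrite hg hf. Qed.

End LinearMaps.

Ltac distr_scale :=
  rewrite ?(mulrDl, mulrDr, =^~scalerAl, =^~scalerAr, scalerDr, scalerA).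

Section Multilinear.
Variables (F : fieldType) (H R : algType F) (phi psi chi : H -> R).
Hypotheses (lin_phi : linmap phi) (lin_psi : linmap psi) (lin_chi : linmap chi).

Lemma bilin_mul : bilin (fun u v => phi u * psi v).
Proof. by split=> [z|x] a u v /=; rewrite ?lin_phi ?lin_psi; distr_scale. Qed.

Lemma trilin_mul : trilin (fun u v w => phi u * psi v * chi w).
Proof.
by split=> [y z|y z|y z] a u v /=; rewrite ?lin_phi ?lin_psi ?lin_chi; distr_scale.
Qed.

End Multilinear.

Section Hopf.
Variables (F : fieldType) (H : algType F) (cop : H -> seq (H * H)) (eps : H -> F) (S : H -> H).
Hypothesis hopf : cocomm_hopf cop eps S.

Let lin_S := S_lin hopf.
Let lin_eps : linmap (eps : H -> F^o). Proof. exact: eps_lin hopf. Qed.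

Lemma tsum_cop_linmap (V : lmodType F) (b : H -> H -> V) :
  bilin b -> linmap (fun x => tsum b (cop x)).
Proof. by move=> hb a x y; apply: (cop_lin hopf hb). Qed.

Lemma eps_antipode x : eps (S x) = eps x.
Proof.
have epsZ a y : eps (a *: y) = a * eps y by exact: (linmapZ lin_eps).
transitivity (eps (\sum_(p <- cop x) S p.1 * p.2)); last first.
  by rewrite (antipode_l hopf) epsZ (eps_one hopf) mulr1.
rewrite -{1}(counit_r hopf x) (linmap_sum _ _ lin_S) !(linmap_sum _ _ lin_eps).
by apply: eq_bigr => p _; rewrite (linmapZ lin_S) epsZ (eps_mul hopf) mulrC.
Qed.

Lemma eps_sum_cop_mul (U V : H -> H) :
  (forall x, eps (U x) = eps x) -> (forall x, eps (V x) = eps x) ->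
  forall x, eps (\sum_(p <- cop x) U p.1 * V p.2) = eps x.
Proof.
move=> eU eV x; rewrite -{2}(counit_l hopf x) !(linmap_sum _ _ lin_eps).
by apply: eq_bigr => p _; rewrite (eps_mul hopf) (linmapZ lin_eps) (eU p.1) (eV p.2).
Qed.

Variable A : comAlgType F.
Notation conv := (@conv _ _ cop A).
Notation unitA := (unitA eps A).

Lemma conv_linmap (phi psi : H -> A) : linmap phi -> linmap psi -> linmap (conv phi psi).
Proof. by move=> h1 h2; apply: tsum_cop_linmap (bilin_mul h1 h2). Qed.

Lemma eq_conv (phi phi' psi psi' : H -> A) :
  phi =1 phi' -> psi =1 psi' -> conv phi psi =1 conv phi' psi'.
Proof. by move=> e1 e2 x; apply: eq_bigr => p _; rewrite e1 e2. Qed.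

Lemma conv_unitr (phi : H -> A) : linmap phi -> conv phi unitA =1 phi.
Proof.
move=> h x; rewrite -[in RHS](counit_r hopf x) (linmap_sum _ _ h).
by apply: eq_bigr => p _; rewrite (linmapZ h) -scalerAr mulr1.
Qed.

Lemma conv_unitl (phi : H -> A) : linmap phi -> conv unitA phi =1 phi.
Proof.
move=> h x; rewrite -[in RHS](counit_l hopf x) (linmap_sum _ _ h).
by apply: eq_bigr => p _; rewrite (linmapZ h) -scalerAl mul1r.
Qed.

Lemma conv_assoc (phi psi chi : H -> A) : linmap phi -> linmap psi -> linmap chi ->
  conv (conv phi psi) chi =1 conv phi (conv psi chi).
Proof.
move=> h1 h2 h3 x; rewrite /Defs.conv.
under eq_bigr do rewrite mulr_suml; under [RHS]eq_bigr do rewrite mulr_sumr.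
rewrite (cop_coassoc hopf (trilin_mul h1 h2 h3)).
by apply: eq_bigr => p _; apply: eq_bigr => q _; rewrite mulrA.
Qed.

Lemma conv_inverse_unique (u v w : H -> A) : linmap u -> linmap v -> linmap w ->
  conv w u =1 unitA -> conv u v =1 unitA -> v =1 w.
Proof.
move=> hu hv hw wu uv x.
rewrite -conv_unitl // -(eq_conv wu (frefl v)) conv_assoc //.
by rewrite (eq_conv (frefl w) uv) conv_unitr.
Qed.

Lemma calB_conv (B : H -> H) (phi psi : H -> A) : coalg_hom cop eps B ->
  linmap phi -> linmap psi -> calB B (conv phi psi) =1 conv (calB B phi) (calB B psi).
Proof.
case=> _ cop_B _ h1 h2 x; have /= := cop_B _ _ (bilin_mul h1 h2) x.
by rewrite /tsum /calB /Defs.conv => <-.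
Qed.

Lemma unitA_char : isChar unitA.
Proof.
split.
- by move=> a x y; rewrite /Defs.unitA (eps_lin hopf) scalerDl scalerA.
- by move=> x y; rewrite /Defs.unitA (eps_mul hopf) -scalerAl mul1r scalerA.
- by rewrite /Defs.unitA (eps_one hopf) scale1r.
Qed.

Lemma conv_char (f g : H -> A) : isChar f -> isChar g -> isChar (conv f g).
Proof.
case=> hf mf f1 [hg mg g1]; split.
- exact: conv_linmap.
- move=> x y; rewrite /Defs.conv.
  rewrite [LHS](cop_mul hopf (bilin_mul hf hg)) mulr_suml; apply: eq_bigr => p _.
  rewrite mulr_sumr; apply: eq_bigr => q _; rewrite mf mg.
  by rewrite -!mulrA; congr (_ * _); rewrite mulrCA.
- by rewrite /Defs.conv [LHS](cop_one hopf (bilin_mul hf hg)) f1 g1 mulr1.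
Qed.

Lemma conv_char_antipode_r (f : H -> A) : isChar f -> conv f (fun y => f (S y)) =1 unitA.
Proof.
case=> hf mf f1 x; rewrite /Defs.conv.
under eq_bigr do rewrite -mf.
by rewrite -(linmap_sum _ _ hf) (antipode_r hopf) (linmapZ hf) f1.
Qed.

Lemma conv_char_antipode_l (f : H -> A) : isChar f -> conv (fun y => f (S y)) f =1 unitA.
Proof.
case=> hf mf f1 x; rewrite /Defs.conv.
under eq_bigr do rewrite -mf.
by rewrite -(linmap_sum _ _ hf) (antipode_l hopf) (linmapZ hf) f1.
Qed.

(* Convolution on H (x) H, whose linear maps to A are represented by bilinear
   maps H -> H -> A. *)
Definition conv2 (phi psi : H -> H -> A) : H -> H -> A :=
  fun x y => \sum_(p <- cop x) \sum_(q <- cop y) phi p.1 q.1 * psi p.2 q.2.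

Definition unit2 : H -> H -> A := fun x y => (eps x * eps y) *: 1.

Lemma eq_conv2 (phi phi' psi psi' : H -> H -> A) :
  phi =2 phi' -> psi =2 psi' -> conv2 phi psi =2 conv2 phi' psi'.
Proof.
by move=> e1 e2 x y; apply: eq_bigr => p _; apply: eq_bigr => q _; rewrite e1 e2.
Qed.

Lemma conv2_unitr (phi : H -> H -> A) : bilin phi -> conv2 phi unit2 =2 phi.
Proof.
case=> hl hr x y; rewrite -[in RHS](counit_r hopf x) -[in RHS](counit_r hopf y).
rewrite (linmap_sum _ _ (hl _)); apply: eq_bigr => p _.
rewrite (linmap_sum _ _ (hr _)); apply: eq_bigr => q _.
by rewrite (linmapZ (hl _)) (linmapZ (hr _)) scalerA -scalerAr mulr1 mulrC.
Qed.

Lemma conv2_unitl (phi : H -> H -> A) : bilin phi -> conv2 unit2 phi =2 phi.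
Proof.
case=> hl hr x y; rewrite -[in RHS](counit_l hopf x) -[in RHS](counit_l hopf y).
rewrite (linmap_sum _ _ (hl _)); apply: eq_bigr => p _.
rewrite (linmap_sum _ _ (hr _)); apply: eq_bigr => q _.
by rewrite (linmapZ (hl _)) (linmapZ (hr _)) scalerA -scalerAl mul1r mulrC.
Qed.

Lemma conv2_assoc (phi psi chi : H -> H -> A) : bilin phi -> bilin psi -> bilin chi ->
  conv2 (conv2 phi psi) chi =2 conv2 phi (conv2 psi chi).
Proof.
(* Coassociativity of H (x) H, applied to one tensor factor at a time. *)
move=> [phil phir] [psil psir] [chil chir] x y.
have coassoc_x a b c :
    \sum_(p <- cop x) \sum_(p' <- cop p.1) phi p'.1 a * psi p'.2 b * chi p.2 c =
    \sum_(p <- cop x) \sum_(r <- cop p.2) phi p.1 a * psi r.1 b * chi r.2 c.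
  apply: (cop_coassoc hopf (g := fun u v w => phi u a * psi v b * chi w c)).
  by split=> [v w|u w|u v] k s t /=; rewrite ?phil ?psil ?chil; distr_scale.
have coassoc_y u v w :
    \sum_(q <- cop y) \sum_(q' <- cop q.1) phi u q'.1 * psi v q'.2 * chi w q.2 =
    \sum_(q <- cop y) \sum_(s <- cop q.2) phi u q.1 * psi v s.1 * chi w s.2.
  apply: (cop_coassoc hopf (g := fun a b c => phi u a * psi v b * chi w c)).
  by split=> [b c|a c|a b] k s t /=; rewrite ?phir ?psir ?chir; distr_scale.
rewrite /conv2.
transitivity (\sum_(q <- cop y) \sum_(q' <- cop q.1) \sum_(p <- cop x) \sum_(p' <- cop p.1)
                phi p'.1 q'.1 * psi p'.2 q'.2 * chi p.2 q.2).
  rewrite exchange_big; apply: eq_bigr => q _.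
  under eq_bigr do rewrite mulr_suml.
  under eq_bigr do under eq_bigr do rewrite mulr_suml.
  under eq_bigr do rewrite exchange_big.
  exact: exchange_big.
under eq_bigr do under eq_bigr do rewrite coassoc_x.
transitivity (\sum_(p <- cop x) \sum_(r <- cop p.2) \sum_(q <- cop y) \sum_(q' <- cop q.1)
                phi p.1 q'.1 * psi r.1 q'.2 * chi r.2 q.2).
  under eq_bigr do rewrite exchange_big.
  under eq_bigr do under eq_bigr do rewrite exchange_big.
  by rewrite exchange_big; apply: eq_bigr => p _; rewrite exchange_big.
apply: eq_bigr => p _.
under eq_bigr do rewrite coassoc_y.
rewrite exchange_big; apply: eq_bigr => q _; rewrite mulr_sumr.
apply: eq_bigr => r _; rewrite mulr_sumr.
by apply: eq_bigr => s _; rewrite mulrA.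
Qed.

(* In H (x) H, both (x, y) |-> f (S (x y)) and (x, y) |-> f (S x) f (S y) are
   convolution inverses of (x, y) |-> f x f y. *)
Lemma char_antipode (f : H -> A) : isChar f -> isChar (fun x => f (S x)).
Proof.
move=> fc; have [hf mf f1] := fc.
pose fS x := f (S x); have hfS : linmap fS := comp_linmap hf lin_S.
pose M u v := f u * f v; pose P u v := fS (u * v); pose Q u v := fS u * fS v.
have bM : bilin M := bilin_mul hf hf.
have bQ : bilin Q := bilin_mul hfS hfS.
have bP : bilin P.
  by split=> z a u v; rewrite /P; distr_scale; rewrite hfS.
have MP : conv2 M P =2 unit2.
  move=> x y; rewrite /conv2 /M /P.
  under eq_bigr do under eq_bigr do rewrite -mf.
  have /= <- := cop_mul hopf (bilin_mul hf hfS) x y.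
  by have := conv_char_antipode_r fc (x * y); rewrite /Defs.unitA (eps_mul hopf).
have QM : conv2 Q M =2 unit2.
  move=> x y; have -> : unit2 x y = unitA x * unitA y.
    by rewrite /Defs.unitA -scalerAl mul1r scalerA.
  rewrite -(conv_char_antipode_l fc x) -(conv_char_antipode_l fc y) /Defs.conv /conv2.
  rewrite mulr_suml; apply: eq_bigr => p _; rewrite mulr_sumr; apply: eq_bigr => q _.
  by rewrite mulrACA.
split=> // [x y|].
- change (P x y = Q x y); rewrite -conv2_unitl // -(eq_conv2 QM (rrefl P)).
  by rewrite conv2_assoc // (eq_conv2 (rrefl Q) MP) conv2_unitr.
- have := conv_char_antipode_r fc 1; have /= := cop_one hopf (bilin_mul hf hfS).
  by rewrite /tsum /Defs.conv => -> ; rewrite f1 mul1r /Defs.unitA (eps_one hopf) scale1r.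
Qed.

End Hopf.

Section RotaBaxter.
Variables (F : fieldType) (H : algType F) (cop : H -> seq (H * H)) (eps : H -> F).
Variables (S B1 B2 : H -> H) (A : comAlgType F).
Hypothesis hopf : cocomm_hopf cop eps S.
Hypotheses (cB1 : coalg_hom cop eps B1) (cB2 : coalg_hom cop eps B2).
Notation T := (Tant cop S B1 B2).
Notation circ := (circ cop S B1 B2).
Notation sigma := (sigma cop S B1 B2).
Notation conv := (@conv _ _ cop A).
Notation unitA := (unitA eps A).
Notation inKer := (inKer cop eps S B1 B2).
Notation invB := (invB cop S B1 B2).

Let lin_S := S_lin hopf.
Let lin_B1 : linmap B1. Proof. by case: cB1. Qed.
Let lin_B2 : linmap B2. Proof. by case: cB2. Qed.
Let eps_B1 x : eps (B1 x) = eps x. Proof. by case: cB1. Qed.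
Let eps_B2 x : eps (B2 x) = eps x. Proof. by case: cB2. Qed.
Let lin_unitA : linmap unitA. Proof. by case: (unitA_char hopf A). Qed.

Lemma Tant_linmap : linmap T.
Proof.
have := bilin_mul (comp_linmap lin_S lin_B1) lin_B2.
exact: (tsum_cop_linmap hopf (b := fun u v => S (B1 u) * B2 v)).
Qed.

Lemma eps_sigma a : eps (sigma a) = eps a.
Proof.
apply: (eps_sum_cop_mul hopf (U := B1) (V := S \o B2)) => x //=.
by rewrite (eps_antipode hopf) eps_B2.
Qed.

Lemma eps_Tant a : eps (T a) = eps a.
Proof.
apply: (eps_sum_cop_mul hopf (U := S \o B1) (V := B2)) => x //=.
by rewrite (eps_antipode hopf) eps_B1.
Qed.

Lemma coalg_hom_antipode (B : H -> H) : coalg_hom cop eps B ->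
  forall x, \sum_(p <- cop x) B p.1 * S (B p.2) = eps x *: 1.
Proof.
case=> hB cop_B eps_B x.
have /= := cop_B _ _ (bilin_mul (fun a u v => erefl (a *: u + v)) lin_S) x.
by rewrite /tsum => <-; rewrite (antipode_r hopf) eps_B.
Qed.

Lemma Tant_mul_antipode_B2 y : \sum_(p <- cop y) T p.1 * S (B2 p.2) = S (B1 y).
Proof.
have lin_SB1 := comp_linmap lin_S lin_B1; have lin_SB2 := comp_linmap lin_S lin_B2.
under eq_bigr do rewrite /Tant mulr_suml.
rewrite (cop_coassoc hopf (trilin_mul lin_SB1 lin_B2 lin_SB2)) /=.
under eq_bigr do under eq_bigr do rewrite -mulrA.
under eq_bigr do rewrite -mulr_sumr (coalg_hom_antipode cB2) -scalerAr mulr1.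
rewrite -[in RHS](counit_r hopf y) (linmap_sum _ _ lin_B1) (linmap_sum _ _ lin_S).
by apply: eq_bigr => p _; rewrite (linmapZ lin_B1) (linmapZ lin_S).
Qed.

Lemma circ_Tant_r a : \sum_(p <- cop a) circ p.1 (T p.2) = eps a *: 1.
Proof.
have lin_SB2 := comp_linmap lin_S lin_B2.
have tri : trilin (fun x y z => B1 x * T z * S (B2 y)).
  by split=> [y z|x z|x y] k u v /=; rewrite ?lin_B1 ?lin_B2 ?lin_S ?Tant_linmap; distr_scale.
have /= coassoc := cop_coassoc hopf tri a.
have cocomm := cop_cocomm hopf (bilin_mul Tant_linmap lin_SB2); rewrite /tsum /= in cocomm.
rewrite /Defs.circ coassoc.
under eq_bigr do under eq_bigr do rewrite -mulrA.
under eq_bigr do rewrite -mulr_sumr -cocomm Tant_mul_antipode_B2.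
exact: coalg_hom_antipode cB1 a.
Qed.

Definition RB_operator (B : H -> H) : Prop :=
  [/\ coalg_hom cop eps B, B 1 = 1 & forall a b, B a * B b = B (circ a b)].

Section RBOperator.
Variable B : H -> H.
Hypothesis RB_B : RB_operator B.

Let cB : coalg_hom cop eps B. Proof. by case: RB_B. Qed.
Let lin_B : linmap B. Proof. by case: cB. Qed.
Let eps_B x : eps (B x) = eps x. Proof. by case: cB. Qed.
Let B_1 : B 1 = 1. Proof. by case: RB_B. Qed.
Let B_circ a b : B a * B b = B (circ a b). Proof. by case: RB_B. Qed.

Lemma calB_antipode (f : H -> A) : isChar f -> calB B (fun x => f (S x)) =1 invB (calB B f).
Proof.
move=> fc; have [hf mf f1] := fc; apply: fsym.
apply: (conv_inverse_unique (u := calB B f) hopf).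
- exact: comp_linmap hf lin_B.
- exact: comp_linmap hf (comp_linmap lin_B Tant_linmap).
- exact: comp_linmap (comp_linmap hf lin_S) lin_B.
- move=> x; rewrite -(calB_conv cB) //; last exact: comp_linmap hf lin_S.
  by rewrite /calB (conv_char_antipode_l hopf fc) /Defs.unitA eps_B.
- move=> x; rewrite /Defs.conv /invB /calB.
  under eq_bigr do rewrite -mf B_circ.
  rewrite -(linmap_sum _ _ (comp_linmap hf lin_B)) circ_Tant_r.
  by rewrite (linmapZ (comp_linmap hf lin_B)) /= B_1 f1.
Qed.

Lemma B_sigma a : B (sigma a) = B a.
Proof.
have -> : sigma a = circ a 1 by apply: eq_bigr => p _; rewrite mulr1.
by rewrite -B_circ B_1 mulr1.
Qed.

Lemma inKerP (f : H -> A) : inKer B f <-> isChar f /\ calB B f =1 unitA.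
Proof.
split=> -[fc kf]; (split; first done).
- move=> a; have := kf (sigma a) (ex_intro _ a erefl).
  by rewrite /calB B_sigma /Defs.unitA eps_sigma.
- move=> x [a ->]; have := kf a.
  by rewrite /calB B_sigma /Defs.unitA eps_sigma.
Qed.

Lemma calB_unitA : calB B unitA =1 unitA.
Proof. by move=> x; rewrite /calB /Defs.unitA eps_B. Qed.

Lemma inKer_unitA : inKer B unitA.
Proof. by apply/inKerP; split; [exact: unitA_char hopf A | exact: calB_unitA]. Qed.

Lemma inKer_conv (f g : H -> A) : inKer B f -> inKer B g -> inKer B (conv f g).
Proof.
move=> /inKerP[fc kf] /inKerP[gc kg]; have [hf _ _] := fc; have [hg _ _] := gc.
apply/inKerP; split; first exact: (conv_char hopf fc gc).
by move=> x; rewrite (calB_conv cB) // (eq_conv cop kf kg) (conv_unitr hopf lin_unitA).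
Qed.

Lemma inKer_antipode (f : H -> A) : inKer B f -> inKer B (fun x => f (S x)).
Proof.
move=> /inKerP[fc kf]; apply/inKerP; split; first exact: (char_antipode hopf fc).
by move=> x; rewrite calB_antipode // /invB kf /Defs.unitA eps_Tant.
Qed.

Lemma inKer_conj (g f : H -> A) : isChar g -> inKer B f ->
  inKer B (conv (conv g f) (fun x => g (S x))).
Proof.
move=> gc /inKerP[fc kf]; have gSc := char_antipode hopf gc.
have [hg _ _] := gc; have [hf _ _] := fc; have [hgS _ _] := gSc.
apply/inKerP; split; first exact: (conv_char hopf (conv_char hopf gc fc) gSc).
move=> x; rewrite (calB_conv cB) //; last exact: (conv_linmap hopf hg hf).
rewrite (eq_conv cop (calB_conv cB hg hf) (frefl _)).
rewrite (eq_conv cop (eq_conv cop (frefl _) kf) (frefl _)).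
rewrite (eq_conv cop (conv_unitr hopf (comp_linmap hg lin_B)) (frefl _)).
rewrite -(calB_conv cB) //.
by rewrite /calB (conv_char_antipode_r hopf gc) /Defs.unitA eps_B.
Qed.

End RBOperator.

Lemma image_of_ker_normal_RB (Bi Bj : H -> H) : RB_operator Bi -> RB_operator Bj ->
  image_of_ker_normal cop eps S B1 B2 A Bi Bj.
Proof.
move=> RBi RBj; have [cBi _ _] := RBi.
split=> [f [fc _]| | f g kf kg | f kf | g f gc kf].
- by exists f.
- by exists unitA; split; [exact: inKer_unitA RBj | move=> x _; exact: calB_unitA RBi x].
- exists (conv f g); split; first exact: (inKer_conv RBj kf kg).
  by move=> x _; apply: (calB_conv cBi); [case: kf => -[] | case: kg => -[]].
- exists (fun x => f (S x)); split; first exact: (inKer_antipode RBj kf).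
  by move=> x _; apply: (calB_antipode RBi); case: kf.
- exists (conv (conv g f) (fun x => g (S x))); split; first exact: (inKer_conj RBj gc kf).
  have [hg _ _] := gc; have [[hf _ _] _] := kf.
  move=> x _; rewrite (calB_conv cBi (conv_linmap hopf hg hf) (comp_linmap hg lin_S)).
  exact: (eq_conv cop (calB_conv cBi hg hf) (calB_antipode RBi gc)).
Qed.

End RotaBaxter.

Unset Implicit Arguments.
Theorem mainTheorem12 (F : fieldType) (charF0 : [pchar F] =i pred0)
  (H : algType F) (cop : H -> seq (H * H)) (eps : H -> F) (S : H -> H)
  (B1 B2 : H -> H) (hRB : RB_system cop eps S B1 B2)
  (A : comAlgType F) :
  image_of_ker_normal cop eps S B1 B2 A B1 B2 /\
  image_of_ker_normal cop eps S B1 B2 A B2 B1.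
Proof.
case: hRB => hopf cB1 cB2 B1_1 B2_1 B1_circ B2_circ.
have RB1 : RB_operator cop eps S B1 B2 B1 by split.
have RB2 : RB_operator cop eps S B1 B2 B2 by split.
by split; apply: image_of_ker_normal_RB.
Qed.
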